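(* Let $F$ be any field, $N\in\mathbb{N}$, and $p,p'\in\mathbb{N}$ with $p+p'\le N+1$. If $x\in F^{N+1}$ satisfies $\operatorname{rank}(H_{p,p'-1}(x))\le p$, then $\operatorname{rank}(H_{p,p'-1}(x))\le \operatorname{rank}(H_{p-1,p'}(x))$.
   Context: $\mathbb{N}=\{0,1,2,\ldots\}$. For $N\in\mathbb{N}$, $x=(x_0,\ldots,x_N)\in F^{N+1}$ and integers $s,t\ge -1$ with $s+t\le N$, the Hankel matrix $H_{s,t}(x)$ is the $(s+1)\times(t+1)$ matrix $(x_{i+j})_{0\le i\le s,\,0\le j\le t}$ (a matrix with zero rows or columns has rank $0$). *)

From mathcomp Require Import all_boot all_algebra.
Set Implicit Arguments. Unset Strict Implicit. Unset Printing Implicit Defensive.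
Import GRing.Theory.
Local Open Scope ring_scope.

(* In the paper's notation H_{s,t}(x) has s+1 rows and
   t+1 columns, so H_{s,t}(x) = hankel x (s+1) (t+1); s = -1 or t = -1 gives
   zero rows/columns.  Out-of-range indices (never used when s+t <= N) give 0. *)
Definition hankel (F : fieldType) (N : nat) (x : 'rV[F]_N.+1) (r c : nat)
  : 'M[F]_(r, c) :=
  \matrix_(i < r, j < c)
    (if (i + j < N.+1)%N then x 0 (inord (i + j)) else 0).

From mathcomp Require Import all_boot all_algebra.
From mathcomp Require Import zify.
Set Implicit Arguments. Unset Strict Implicit. Unset Printing Implicit Defensive.
Import GRing.Theory.
Local Open Scope ring_scope.

(* Proof idea: a left-kernel argument.  Write A = H_{p,p'-1}(x) (size
   (p+1) x p') and B = H_{p-1,p'}(x) (size p x (p'+1)).  If rank B = p the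
   hypothesis rank A <= p already gives the claim.  Otherwise the left kernel
   K of B is non-zero, and the Hankel structure shows that both "paddings"
   u |-> (u, 0) and u |-> (0, u) map K into the left kernel of A.  The sum of
   the two padded copies of K is strictly larger than K: otherwise the padded
   space K*[I|0] would be a subspace of F^{p+1} with zero last coordinate that
   is stable under the right shift, hence zero.  Counting dimensions,
   (p+1) - rank A >= (p - rank B) + 1, i.e. rank A <= rank B. *)

Section Padding.
Variable F : fieldType.

Lemma sum_delta_l (n : nat) (f : 'I_n -> F) (k0 : 'I_n) (m : nat) :
  m = k0 -> \sum_(k < n) ((m == k :> nat)%:R * f k) = f k0.
Proof.
move=> ->; rewrite (bigD1 k0) //= eqxx mul1r big1 ?addr0 // => k nk.
by rewrite eq_sym (negbTE (nk : k != k0 :> nat)) mul0r.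
Qed.

Lemma sum_delta_r (n : nat) (f : 'I_n -> F) (k0 : 'I_n) (m : nat) :
  m = k0 -> \sum_(k < n) (f k * (k == m :> nat)%:R) = f k0.
Proof.
move=> ->; rewrite (bigD1 k0) //= eqxx mulr1 big1 ?addr0 // => k nk.
by rewrite (negbTE (nk : k != k0 :> nat)) mulr0.
Qed.

(* Right multiplication by pad_last n maps u to (u, 0), by pad_first n maps
   u to (0, u), and by shift_right n maps (v_0,...,v_n) to (0,v_0,...,v_{n-1}). *)
Definition pad_last (n : nat) : 'M[F]_(n, n.+1) :=
  \matrix_(i, j) ((i : nat) == j)%:R.
Definition pad_first (n : nat) : 'M[F]_(n, n.+1) :=
  \matrix_(i, j) ((i.+1 : nat) == j)%:R.
Definition shift_right (n : nat) : 'M[F]_n.+1 :=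
  \matrix_(k, l) ((k.+1 : nat) == l)%:R.

(* Padding at the end has a right inverse, so it preserves rank. *)
Lemma pad_lastK (n : nat) : pad_last n *m (pad_last n)^T = 1%:M.
Proof.
apply/matrixP => i j; rewrite !mxE; under eq_bigr do rewrite !mxE.
by rewrite (@sum_delta_l _ _ (widen_ord (leqnSn n) i)) //= eq_sym.
Qed.

Lemma pad_last_shift (n : nat) : pad_last n *m shift_right n = pad_first n.
Proof.
apply/matrixP => i j; rewrite !mxE; under eq_bigr do rewrite !mxE.
by rewrite (@sum_delta_l _ _ (widen_ord (leqnSn n) i)) //= eq_sym.
Qed.

Lemma pad_last_ord_max (n : nat) (u : 'rV[F]_n) :
  (u *m pad_last n) 0 ord_max = 0.
Proof.
rewrite !mxE big1 // => i _; rewrite !mxE /=.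
by rewrite ltn_eqF ?mulr0.
Qed.

Lemma shift_right_lift (n : nat) (v : 'rV[F]_n.+1) (j : 'I_n.+1)
    (hj : (j.+1 < n.+1)%N) :
  (v *m shift_right n) 0 (Ordinal hj) = v 0 j.
Proof.
rewrite !mxE; under eq_bigr do rewrite !mxE.
by rewrite (@sum_delta_r _ _ j).
Qed.

(* A row space of F^{n+1} whose vectors all vanish in the last coordinate and
   which is stable under the right shift is zero: shifting k times moves every
   coordinate of index n - k into the last position. *)
Lemma shift_stable_rows_eq0 (m n : nat) (V : 'M[F]_(m, n.+1)) :
  (forall v : 'rV_n.+1, (v <= V)%MS -> v 0 ord_max = 0) ->
  (forall v : 'rV_n.+1, (v <= V)%MS -> (v *m shift_right n <= V)%MS) ->
  V = 0.
Proof.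
move=> last0 stable.
have vanish k : forall (v : 'rV_n.+1) (j : 'I_n.+1),
    (v <= V)%MS -> (j + k = n)%N -> v 0 j = 0.
  elim: k => [|k IH] v j vV hj.
    have -> : j = ord_max by apply: val_inj => /=; lia.
    exact: last0.
  have hj1 : (j.+1 < n.+1)%N by lia.
  rewrite -(shift_right_lift v hj1).
  by apply: IH; [exact: stable | rewrite /=; lia].
apply/matrixP => i j; rewrite [RHS]mxE.
have := vanish (n - j)%N (row i V) j (row_sub i V).
by rewrite mxE; apply; have := ltn_ord j; lia.
Qed.

Lemma rank_pad_sum (m n : nat) (K : 'M[F]_(m, n)) :
  K != 0 -> (\rank K < \rank (K *m pad_last n + K *m pad_first n)%MS)%N.
Proof.
move=> nzK; set V := K *m pad_last n.
have rankV : \rank V = \rank K.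
  apply/eqP; rewrite eqn_leq mxrankM_maxl /=.
  by rewrite -[X in (\rank X <= _)%N]mulmx1 -pad_lastK mulmxA mxrankM_maxl.
have sumV := mxrank_leqif_sup (addsmxSl V (K *m pad_first n)).
rewrite -rankV ltn_neqAle sumV.1 andbT sumV.2; apply/negP => padV.
have stable (v : 'rV_n.+1) : (v <= V)%MS -> (v *m shift_right n <= V)%MS.
  case/submxP => D ->; rewrite /V -!mulmxA pad_last_shift.
  exact: submx_trans (submxMl D _) (submx_trans (addsmxSr _ _) padV).
have last0 (v : 'rV_n.+1) : (v <= V)%MS -> v 0 ord_max = 0.
  by case/submxP => D ->; rewrite /V mulmxA pad_last_ord_max.
have V0 := shift_stable_rows_eq0 last0 stable.
by move: nzK; rewrite -[K]mulmx1 -pad_lastK mulmxA -/V V0 mul0mx eqxx.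
Qed.

End Padding.

(* The Hankel identities: deleting the last row of H_{p,q-1} equals deleting
   the last column of H_{p-1,q}, and deleting the first row of H_{p,q-1}
   equals deleting the first column of H_{p-1,q}. *)
Lemma hankel_pad_last (F : fieldType) (N p q : nat) (x : 'rV[F]_N.+1) :
  pad_last F p *m hankel x p.+1 q = hankel x p q.+1 *m (pad_last F q)^T.
Proof.
apply/matrixP => i j; rewrite !mxE; under eq_bigr do rewrite !mxE.
rewrite (@sum_delta_l _ _ _ (widen_ord (leqnSn p) i)) //.
under [RHS]eq_bigr do rewrite !mxE eq_sym.
by rewrite (@sum_delta_r _ _ _ (widen_ord (leqnSn q) j)).
Qed.

Lemma hankel_pad_first (F : fieldType) (N p q : nat) (x : 'rV[F]_N.+1) :
  pad_first F p *m hankel x p.+1 q = hankel x p q.+1 *m (pad_first F q)^T.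
Proof.
apply/matrixP => i j; rewrite !mxE; under eq_bigr do rewrite !mxE.
rewrite (@sum_delta_l _ _ _ (lift ord0 i)) //.
under [RHS]eq_bigr do rewrite !mxE eq_sym.
by rewrite (@sum_delta_r _ _ _ (lift ord0 j)) // !lift0 addSn addnS.
Qed.

Lemma hankel_kernel_pad (F : fieldType) (N p q : nat) (x : 'rV[F]_N.+1) :
  (kermx (hankel x p q.+1) *m pad_last F p
     + kermx (hankel x p q.+1) *m pad_first F p <= kermx (hankel x p.+1 q))%MS.
Proof.
set K := kermx _; have KB : K *m hankel x p q.+1 = 0 by apply: mulmx_ker.
rewrite addsmx_sub !sub_kermx -!mulmxA hankel_pad_last hankel_pad_first.
by rewrite !mulmxA KB !mul0mx eqxx.
Qed.

Theorem lemma6 (F : fieldType) (N p p' : nat) (x : 'rV[F]_N.+1) :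
  (p + p' <= N.+1)%N ->
  (\rank (hankel x p.+1 p') <= p)%N ->
  (\rank (hankel x p.+1 p') <= \rank (hankel x p p'.+1))%N.
Proof.
move=> _ rankA.
set A := hankel x p.+1 p'; set B := hankel x p p'.+1.
have [-> // | rankB] := eqVneq (\rank B) p.
have rankB_le : (\rank B <= p)%N := rank_leq_row B.
have dimK : \rank (kermx B) = (p - \rank B)%N := mxrank_ker B.
have nzK : kermx B != 0 by rewrite -mxrank_eq0 dimK; lia.
have grow := rank_pad_sum nzK.
have dimKA := mxrankS (@hankel_kernel_pad F N p p' x).
move: dimKA grow; rewrite mxrank_ker -/A -/B dimK; lia.
Qed.
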